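(* Let $I\subseteq S=\Bbbk[x_1,\dots,x_n]$ be a squarefree monomial ideal which is Gotzmann in $S$, and suppose $(x_i)\subseteq I$. Then the image of $I$ in $S/(x_i)\cong\Bbbk[x_1,\dots,\widehat{x_i},\dots,x_n]$ (i.e. the ideal of $\Bbbk[x_1,\dots,\widehat{x_i},\dots,x_n]$ generated by all minimal monomial generators of $I$ other than $x_i$) is a squarefree monomial ideal which is Gotzmann in $\Bbbk[x_1,\dots,\widehat{x_i},\dots,x_n]$.
   Context: Let $\Bbbk$ be a field. For a polynomial ring $P$ over $\Bbbk$ with variables $y_1,\dots,y_m$ and homogeneous ideal $I$, $I_d$ is its degree-$d$ component, $|I_d|$ its $\Bbbk$-dimension, and $\mathbf m_1I_d$ the span of $\{y_jf: f\in I_d\}$. An ideal $I$ of $P$ is Gotzmann if for every $d$ and every homogeneous ideal $J\subseteq P$ with $|J_d|=|I_d|$ one has $|\mathbf m_1I_d|\le|\mathbf m_1J_d|$. A monomial ideal is squarefree if its minimal monomial generators are squarefree. *)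

From HB Require Import structures.
From mathcomp Require Import all_boot all_order all_algebra.
Set Implicit Arguments. Unset Strict Implicit. Unset Printing Implicit Defensive.
Import GRing.Theory.
Local Open Scope ring_scope.

Definition mono (m d : nat) : finType :=
  {e : {ffun 'I_m -> 'I_d.+1} | \sum_(j < m) (e j : nat) == d}%N.

Definition mexp (m d : nat) (e : mono m d) (j : 'I_m) : nat := val e j.

(* P_d: the F-vector space of homogeneous polynomials of degree d in
   P = F[y_0,...,y_(m-1)], with coefficients indexed by monomials. *)
Definition Hpoly (F : fieldType) (m d : nat) := {ffun mono m d -> F^o}.

Definition xmul_fun (F : fieldType) (m d : nat) (j : 'I_m)
  (f : Hpoly F m d) : Hpoly F m d.+1 :=
  [ffun e' : mono m d.+1 =>
     \sum_(e : mono m d | [forall k, mexp e' k == (mexp e k + (k == j))%N]) f e].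

Lemma xmul_fun_linear (F : fieldType) (m d : nat) (j : 'I_m) :
  linear (@xmul_fun F m d j).
Proof.
move=> a f g; apply/ffunP=> e'; rewrite /xmul_fun !ffunE /=.
rewrite scaler_sumr -big_split /=; apply: eq_bigr=> e _.
by rewrite !ffunE.
Qed.

HB.instance Definition _ (F : fieldType) (m d : nat) (j : 'I_m) :=
  GRing.isLinear.Build F (Hpoly F m d) (Hpoly F m d.+1) _ (@xmul_fun F m d j)
    (@xmul_fun_linear F m d j).

Definition xmul (F : fieldType) (m d : nat) (j : 'I_m) :
  'Hom(Hpoly F m d, Hpoly F m d.+1) := linfun (@xmul_fun F m d j).
Arguments xmul {F m d} j.

Definition xvar (F : fieldType) (m : nat) (j : 'I_m) : Hpoly F m 1 :=
  [ffun e : mono m 1 => (mexp e j == 1)%N%:R].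

Definition monovec (F : fieldType) (m d : nat) (e : mono m d) : Hpoly F m d :=
  [ffun e' => (e' == e)%:R].

(* A homogeneous ideal of P is given by its graded components
   J = (J_d)_d, J_d a subspace of P_d, closed under multiplication by
   each variable (J = direct sum of the J_d). *)
Definition graded_ideal (F : fieldType) (m : nat)
  (J : forall d, {vspace Hpoly F m d}) : Prop :=
  forall (d : nat) (j : 'I_m), (xmul j @: J d <= J d.+1)%VS.

Definition m1 (F : fieldType) (m d : nat) (V : {vspace Hpoly F m d})
  : {vspace Hpoly F m d.+1} :=
  (\sum_(j < m) (xmul j @: V))%VS.

Definition Gotzmann (F : fieldType) (m : nat)
  (I : forall d, {vspace Hpoly F m d}) : Prop :=
  forall (d : nat) (J : forall d, {vspace Hpoly F m d}),
    graded_ideal J -> \dim (J d) = \dim (I d) ->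
    (\dim (m1 (I d)) <= \dim (m1 (J d)))%N.

(* Squarefree monomials are identified with subsets of the variables. *)
Definition sqf_monideal (F : fieldType) (m : nat) (G : {set {set 'I_m}})
  (d : nat) : {vspace Hpoly F m d} :=
  <<[seq monovec F e | e <- enum (mono m d) &
       [exists g in G, [forall k in g, (0 < mexp e k)%N]]]>>%VS.

(* Image of the generators in S/(x_i) = F[x_0,..,^x_i,..,x_n]: generators
   involving x_i map to 0; the others are transported along the
   reindexing j |-> lift i j of the remaining variables. *)
Definition image_gens (n : nat) (i : 'I_n.+1) (G : {set {set 'I_n.+1}})
  : {set {set 'I_n}} :=
  [set [set j : 'I_n | lift i j \in g] | g : {set 'I_n.+1} in G & i \notin g].

From HB Require Import structures.
From mathcomp Require Import all_boot all_order all_algebra.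
Set Implicit Arguments. Unset Strict Implicit. Unset Printing Implicit Defensive.
Import GRing.Theory.
Local Open Scope ring_scope.

(* Let q : S -> S' = S/(x_i) be the map setting x_i to 0, degree by degree.
   Its kernel in degree d is spanned by the monomials divisible by x_i; since
   x_i lies in I, this kernel is contained in I_d, and for d >= 1 also in
   m_1 V whenever it is contained in V.  Moreover q(I_d) = I'_d and q commutes
   with m_1.  Given a homogeneous ideal J' of S' with |J'_d| = |I'_d|, its
   preimage J = q^-1(J') is a homogeneous ideal of S with
   |J_d| = |ker q_d| + |J'_d| = |I_d|, so the Gotzmann property of I gives
   |m_1 I_d| <= |m_1 J_d|; subtracting |ker q_(d+1)| on both sides yields
   |m_1 I'_d| <= |m_1 J'_d|.  In degree 0 subspaces are determined by their
   dimension. *)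


Section Monomials.
Variable m : nat.

Lemma eq_mono (d : nat) (e1 e2 : mono m d) :
  (forall k, mexp e1 k = mexp e2 k) -> e1 = e2.
Proof. by move=> E; apply/val_inj/ffunP => k; apply/val_inj/E. Qed.

Lemma mexp_sum (d : nat) (e : mono m d) : (\sum_(k < m) mexp e k)%N = d.
Proof. by case: e => f sum_f; apply/eqP. Qed.

Lemma mexp_le (d : nat) (e : mono m d) k : (mexp e k <= d)%N.
Proof. by rewrite -ltnS /mexp ltn_ord. Qed.

Section MonoOf.
Variables (d : nat) (g : 'I_m -> nat) (sum_g : (\sum_(k < m) g k)%N = d).

Fact mono_of_le k : (g k <= d)%N.
Proof. by rewrite -sum_g (bigD1 k) //= leq_addr. Qed.

Fact mono_of_subproof :
  (\sum_(k < m) ([ffun k => inord (g k)] : {ffun 'I_m -> 'I_d.+1}) k == d)%N.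
Proof.
rewrite -[X in _ == X]sum_g; apply/eqP/eq_bigr => k _.
by rewrite ffunE inordK // ltnS mono_of_le.
Qed.

Definition mono_of : mono m d :=
  exist (fun e : {ffun 'I_m -> 'I_d.+1} => \sum_(k < m) e k == d)%N _
    mono_of_subproof.

Lemma mexp_mono_of k : mexp mono_of k = g k.
Proof. by rewrite /mexp /= ffunE inordK // ltnS mono_of_le. Qed.

End MonoOf.

Definition mono_one : mono m 0 := @mono_of 0 (fun=> 0%N) (big1_eq _ _).

Lemma mono0_one (e : mono m 0) : e = mono_one.
Proof.
apply: eq_mono => k; rewrite mexp_mono_of; apply/eqP.
by rewrite -leqn0 (mexp_le e).
Qed.

Fact mulx_subproof (d : nat) (e : mono m d) (j : 'I_m) :
  (\sum_(k < m) (mexp e k + (k == j)))%N = d.+1.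
Proof.
rewrite big_split /= mexp_sum (bigD1 j) //= eqxx big1 ?addn0 ?addn1 //.
by move=> k /negbTE ->.
Qed.

Definition mulx (d : nat) (e : mono m d) (j : 'I_m) : mono m d.+1 :=
  mono_of (mulx_subproof e j).

Lemma mexp_mulx (d : nat) (e : mono m d) j k :
  mexp (mulx e j) k = (mexp e k + (k == j))%N.
Proof. exact: mexp_mono_of. Qed.

Fact divx_subproof (d : nat) (e : mono m d.+1) (j : 'I_m) :
  (0 < mexp e j)%N -> (\sum_(k < m) (mexp e k - (k == j)))%N = d.
Proof.
move=> ej; transitivity (\sum_(k < m) mexp e k).-1; last by rewrite mexp_sum.
rewrite (bigD1 j) //= [in RHS](bigD1 j) //= eqxx subn1.
rewrite -[X in (X + _).-1](prednK ej) addSn /=; congr (_ + _)%N.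
by apply: eq_bigr => k /negbTE ->; rewrite subn0.
Qed.

Lemma mulxP (d : nat) (e : mono m d.+1) (j : 'I_m) :
  (0 < mexp e j)%N -> exists e' : mono m d, e = mulx e' j.
Proof.
move=> ej; exists (mono_of (divx_subproof ej)).
apply: eq_mono => k; rewrite mexp_mulx mexp_mono_of subnK //.
by case: eqP => // ->.
Qed.

End Monomials.

Section MonomialBasis.
Variables (F : fieldType) (m d : nat).
Implicit Types (f : Hpoly F m d) (e : mono m d).

Lemma monovecE e e' : monovec F e e' = (e' == e)%:R.
Proof. by rewrite ffunE. Qed.

Lemma monovec_sum f : f = \sum_e f e *: monovec F e.
Proof.
apply/ffunP => e'; rewrite sum_ffunE (bigD1 e') //= big1 => [|e ne].
  by rewrite ffunE monovecE eqxx [_ *: _]mulr1 addr0.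
by rewrite ffunE monovecE eq_sym (negbTE ne) [_ *: _]mulr0.
Qed.

Lemma memv_monovec (V : {vspace Hpoly F m d}) f :
  (forall e, f e != 0 -> monovec F e \in V) -> f \in V.
Proof.
move=> suppV; rewrite (monovec_sum f); apply: memv_suml => e _.
by have [->|/suppV] := eqVneq (f e) 0; [rewrite scale0r mem0v | apply: memvZ].
Qed.

Lemma eq_lfun_monovec (vT : vectType F) (h1 h2 : 'Hom(Hpoly F m d, vT)) :
  (forall e, h1 (monovec F e) = h2 (monovec F e)) -> h1 = h2.
Proof.
move=> E; apply/lfunP => f; rewrite (monovec_sum f) !linear_sum.
by apply: eq_bigr => e _; rewrite !linearZ /= E.
Qed.

Variable A : pred (mono m d).
Let X := [seq monovec F e | e <- enum (mono m d) & A e].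

Lemma monovec_span e : A e -> monovec F e \in <<X>>%VS.
Proof.
by move=> Ae; apply/memv_span/map_f; rewrite mem_filter Ae mem_enum.
Qed.

Lemma span_support f : f \in <<X>>%VS -> forall e, f e != 0 -> A e.
Proof.
move=> fX e; apply: contraR => nAe.
rewrite (coord_span (X := in_tuple X) fX) sum_ffunE big1 // => k _.
have /mapP[e'] : X`_k \in X by apply: mem_nth.
rewrite mem_filter => /andP[Ae' _] /= ->.
rewrite !ffunE; case: eqP => [Ee|]; last by rewrite [_ *: _]mulr0.
by move: Ae'; rewrite -Ee (negbTE nAe).
Qed.

End MonomialBasis.

Lemma xmul_monovec (F : fieldType) (m d : nat) (j : 'I_m) (e : mono m d) :
  xmul j (monovec F e) = monovec F (mulx e j).
Proof.
apply/ffunP => e'; rewrite lfunE /= !ffunE.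
have cond y : [forall k, mexp e' k == mexp y k + (k == j)]%N = (e' == mulx y j).
  apply/forallP/eqP => [E|-> k]; last by rewrite mexp_mulx.
  by apply: eq_mono => k; rewrite mexp_mulx; apply/eqP.
rewrite (eq_bigl _ _ cond) big_mkcond (bigD1 e) //= big1 => [|y ne].
  by rewrite !ffunE eqxx addr0; case: ifP.
by rewrite ffunE (negbTE ne); case: ifP.
Qed.

Section Quotient.
Variables (F : fieldType) (n : nat) (i : 'I_n.+1).

Section Degree.
Variable d : nat.
Implicit Types (z : mono n d) (e : mono n.+1 d).

Fact liftm_subproof z :
  (\sum_(k < n.+1) (if unlift i k is Some j then mexp z j else 0))%N = d.
Proof.
rewrite (bigD1_ord i) //= unlift_none add0n -[RHS](mexp_sum z).
by apply: eq_bigr => j _; rewrite liftK.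
Qed.

Definition liftm z : mono n.+1 d := mono_of (liftm_subproof z).

Lemma mexp_liftm_id z : mexp (liftm z) i = 0%N.
Proof. by rewrite mexp_mono_of unlift_none. Qed.

Lemma mexp_liftm z (j : 'I_n) : mexp (liftm z) (lift i j) = mexp z j.
Proof. by rewrite mexp_mono_of liftK. Qed.

Lemma liftm_inj : injective liftm.
Proof. by move=> z1 z2 E; apply: eq_mono => j; rewrite -!mexp_liftm E. Qed.

Lemma liftmP e : mexp e i = 0%N -> exists z, e = liftm z.
Proof.
move=> ei; have sum_e : (\sum_(j < n) mexp e (lift i j))%N = d.
  by rewrite -[RHS](mexp_sum e) (bigD1_ord i) //= ei.
exists (mono_of sum_e); apply: eq_mono => k.
case: (unliftP i k) => [j ->|->]; last by rewrite mexp_liftm_id.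
by rewrite mexp_liftm mexp_mono_of.
Qed.

Definition qmap_fun (f : Hpoly F n.+1 d) : Hpoly F n d :=
  [ffun z => f (liftm z)].

Fact qmap_fun_linear : linear qmap_fun.
Proof. by move=> a f g; apply/ffunP => z; rewrite !ffunE. Qed.

HB.instance Definition _ := GRing.isLinear.Build F
  (Hpoly F n.+1 d) (Hpoly F n d) _ qmap_fun qmap_fun_linear.

Definition qmap : 'Hom(Hpoly F n.+1 d, Hpoly F n d) := linfun qmap_fun.

Lemma qmapE f z : qmap f z = f (liftm z).
Proof. by rewrite lfunE /= ffunE. Qed.

Lemma qmap_monovec_liftm z : qmap (monovec F (liftm z)) = monovec F z.
Proof. by apply/ffunP => z'; rewrite qmapE !monovecE (inj_eq liftm_inj). Qed.

Lemma qmap_monovec_id e : (0 < mexp e i)%N -> qmap (monovec F e) = 0.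
Proof.
move=> ei; apply/ffunP => z; rewrite qmapE !ffunE.
by case: eqP => // E; move: ei; rewrite -E mexp_liftm_id.
Qed.

Lemma lker_qmap_sub (V : {vspace Hpoly F n.+1 d}) :
  (forall e, (0 < mexp e i)%N -> monovec F e \in V) -> (lker qmap <= V)%VS.
Proof.
move=> idV; apply/subvP => f; rewrite memv_ker => /eqP qf0.
apply: memv_monovec => e nfe; apply: idV; rewrite lt0n.
by apply: contraNneq nfe => /liftmP[z ->]; rewrite -qmapE qf0 ffunE.
Qed.

Lemma limg_qmap : limg qmap = fullv.
Proof.
apply/eqP; rewrite eqEsubv subvf /=; apply/subvP => f _.
apply: memv_monovec => z _.
by rewrite -qmap_monovec_liftm memv_img ?memvf.
Qed.

Lemma dimv_qmap (V : {vspace Hpoly F n.+1 d}) :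
  (lker qmap <= V)%VS -> \dim V = (\dim (lker qmap) + \dim (qmap @: V))%N.
Proof. by move=> kerV; rewrite -(limg_ker_dim qmap V) (capv_idPr kerV). Qed.

End Degree.

Arguments qmap {d}.

Lemma liftm_mulx d (z : mono n d) (j : 'I_n) :
  liftm (mulx z j) = mulx (liftm z) (lift i j).
Proof.
apply: eq_mono => k; rewrite mexp_mulx.
case: (unliftP i k) => [j' ->|->]; last first.
  by rewrite !mexp_liftm_id (negbTE (neq_lift _ _)).
by rewrite !mexp_liftm mexp_mulx (inj_eq (@lift_inj _ i)).
Qed.

Lemma qmap_xmul_lift d (j : 'I_n) :
  (qmap \o xmul (lift i j) = xmul j \o @qmap d)%VF.
Proof.
apply: eq_lfun_monovec => e; rewrite !comp_lfunE xmul_monovec.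
have [ei|] := posnP (mexp e i); last first.
  by move=> ei; rewrite !qmap_monovec_id ?linear0 ?mexp_mulx ?ltn_addr.
have [z ->] := liftmP ei.
by rewrite -liftm_mulx !qmap_monovec_liftm xmul_monovec.
Qed.

Lemma qmap_xmul_id d : (qmap \o xmul i = 0 :> 'Hom(Hpoly F n.+1 d, _))%VF.
Proof.
apply: eq_lfun_monovec => e; rewrite comp_lfunE xmul_monovec zero_lfunE.
by rewrite qmap_monovec_id // mexp_mulx eqxx addn1.
Qed.

Lemma qmap_m1 d (V : {vspace Hpoly F n.+1 d}) :
  (qmap @: m1 V = m1 (qmap @: V))%VS.
Proof.
rewrite /m1 limg_sum (bigD1_ord i) //= -limg_comp qmap_xmul_id lim0g add0v.
by apply: eq_bigr => j _; rewrite -!limg_comp qmap_xmul_lift.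
Qed.

End Quotient.

Arguments qmap F {n} i {d}.

Lemma mulx_factor_var (m d : nat) (e : mono m d.+2) (i : 'I_m) :
  (0 < mexp e i)%N ->
  exists k (e' : mono m d.+1), e = mulx e' k /\ (0 < mexp e' i)%N.
Proof.
move=> ei; have [ei2|ei1] := ltnP 1 (mexp e i).
  have [e' Ee] := mulxP ei; exists i, e'; split=> //.
  by move: ei2; rewrite Ee mexp_mulx eqxx addn1.
have [k /andP[ki ek]|no_k] := pickP (fun k => (k != i) && (0 < mexp e k)%N).
  have [e' Ee] := mulxP ek; exists k, e'; split=> //.
  by move: ei; rewrite Ee mexp_mulx eq_sym (negbTE ki) addn0.
suff : (d.+2 <= 1)%N by [].
rewrite -(mexp_sum e) (bigD1 i) //= big1 ?addn0 // => k ki.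
by apply/eqP; rewrite -leqn0 leqNgt; move: (no_k k); rewrite ki => /= ->.
Qed.

Lemma lker_qmap_m1 (F : fieldType) (n : nat) (i : 'I_n.+1) (d : nat)
    (V : {vspace Hpoly F n.+1 d.+1}) :
  (lker (qmap F i) <= V)%VS -> (lker (qmap F i) <= m1 V)%VS.
Proof.
move=> kerV; apply: lker_qmap_sub => e /mulx_factor_var[k [e' [-> e'i]]].
rewrite -xmul_monovec; apply: (subv_trans _ (sumv_sup k _ (subvv _))) => //.
by apply/memv_img/(subvP kerV); rewrite memv_ker qmap_monovec_id.
Qed.

Definition sqf_dvd (m : nat) (G : {set {set 'I_m}}) (d : nat) (e : mono m d)
  : bool :=
  [exists g in G, [forall k in g, (0 < mexp e k)%N]].

Section SquarefreeMonomialIdeal.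
Variables (F : fieldType) (m : nat) (G : {set {set 'I_m}}) (d : nat).

Lemma monovec_sqf_monideal (e : mono m d) :
  sqf_dvd G e -> monovec F e \in sqf_monideal F G d.
Proof. exact: monovec_span. Qed.

Lemma sqf_monideal_support (f : Hpoly F m d) (e : mono m d) :
  f \in sqf_monideal F G d -> f e != 0 -> sqf_dvd G e.
Proof. by move/span_support; apply. Qed.

End SquarefreeMonomialIdeal.

Section QuotientIdeal.
Variables (F : fieldType) (n : nat) (G : {set {set 'I_n.+1}}) (i : 'I_n.+1).

Lemma sqf_dvd_liftm d (z : mono n d) :
  sqf_dvd G (liftm i z) = sqf_dvd (image_gens i G) z.
Proof.
apply/exists_inP/exists_inP => [[g gG /forall_inP g_dvd]|[g' /imsetP[g]]].
  have ig : i \notin g.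
    by apply: contraT => /negbNE/g_dvd; rewrite mexp_liftm_id.
  exists [set j | lift i j \in g].
    by apply/imsetP; exists g; rewrite // inE gG.
  by apply/forall_inP => j; rewrite inE => /g_dvd; rewrite mexp_liftm.
rewrite inE => /andP[gG ig] -> /forall_inP g'_dvd; exists g => //.
apply/forall_inP => k.
case: (unliftP i k) => [j ->|->]; last by rewrite (negbTE ig).
by move=> jg; rewrite mexp_liftm; apply: g'_dvd; rewrite inE.
Qed.

Lemma qmap_sqf_monideal d :
  (qmap F i @: sqf_monideal F G d = sqf_monideal F (image_gens i G) d)%VS.
Proof.
apply/eqP; rewrite eqEsubv; apply/andP; split; apply/subvP => w.
  case/memv_imgP => u uI ->; apply: memv_monovec => z; rewrite qmapE => uz.
  apply: monovec_sqf_monideal; rewrite -sqf_dvd_liftm.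
  exact: sqf_monideal_support uI uz.
move=> wI; apply: memv_monovec => z wz; rewrite -(qmap_monovec_liftm F i).
apply/memv_img/monovec_sqf_monideal; rewrite sqf_dvd_liftm.
exact: sqf_monideal_support wI wz.
Qed.

Lemma lker_qmap_sqf_monideal d : (xvar F i \in sqf_monideal F G 1)%VS ->
  (lker (qmap F i) <= sqf_monideal F G d)%VS.
Proof.
(* x_i in I forces a generator g with g \subset [set i]. *)
pose x_i := mulx (mono_one n.+1) i.
have x_i_k k : mexp x_i k = (k == i) by rewrite mexp_mulx mexp_mono_of.
move=> /(sqf_monideal_support (e := x_i)); rewrite ffunE x_i_k eqxx oner_neq0.
case/(_ isT)/exists_inP => g gG /forall_inP g_i.
apply: lker_qmap_sub => e ei.
apply/monovec_sqf_monideal/exists_inP; exists g => //.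
by apply/forall_inP => k /g_i; rewrite x_i_k lt0b => /eqP ->.
Qed.

End QuotientIdeal.

Section DegreeZero.
Variables (F : fieldType) (m : nat).

Lemma hpoly0E (f : Hpoly F m 0) :
  f = f (mono_one m) *: monovec F (mono_one m).
Proof.
by apply/ffunP => e; rewrite (mono0_one e) !ffunE eqxx [_ *: _]mulr1.
Qed.

Lemma vspace0_full (U : {vspace Hpoly F m 0}) : U != 0%VS -> U = fullv.
Proof.
rewrite -vpick0 => u_neq0; have uU := memv_pick U.
set u := vpick U in u_neq0 uU.
have u1_neq0 : u (mono_one m) != 0.
  by apply: contraNneq u_neq0 => u1; rewrite (hpoly0E u) u1 scale0r.
have oneU : monovec F (mono_one m) \in U.
  by rewrite -[monovec _ _]scale1r -(mulVf u1_neq0) -scalerA -hpoly0E memvZ.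
apply/eqP; rewrite eqEsubv subvf; apply/subvP => f _.
by rewrite [f]hpoly0E memvZ.
Qed.

Lemma eq_dimv0 (U V : {vspace Hpoly F m 0}) : \dim U = \dim V -> U = V.
Proof.
move=> dimUV; have [U0|U_neq0] := eqVneq U 0%VS.
  by rewrite U0; apply/esym/eqP; rewrite -dimv_eq0 -dimUV U0 dimv0.
have V_neq0 : V != 0%VS by rewrite -dimv_eq0 -dimUV dimv_eq0.
by rewrite (vspace0_full U_neq0) (vspace0_full V_neq0).
Qed.

End DegreeZero.

Section Preimage.
Variables (F : fieldType) (n : nat) (i : 'I_n.+1).
Variable J : forall d, {vspace Hpoly F n d}.

Definition qmap_preim d : {vspace Hpoly F n.+1 d} := (qmap F i @^-1: J d)%VS.

Lemma qmap_preimK d : (qmap F i @: qmap_preim d = J d)%VS.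
Proof. by rewrite lpreimK // limg_qmap subvf. Qed.

Lemma lker_qmap_preim d : (lker (qmap F i) <= qmap_preim d)%VS.
Proof. by rewrite -lpreim0 lpreimS ?sub0v. Qed.

Lemma graded_ideal_qmap_preim : graded_ideal J -> graded_ideal qmap_preim.
Proof.
move=> gradedJ d k; apply/subvP => _ /memv_imgP[f fJ ->].
rewrite /qmap_preim -memv_preim -comp_lfunE; move: fJ; rewrite -memv_preim.
case: (unliftP i k) => [j ->|->].
  rewrite qmap_xmul_lift comp_lfunE => fJ.
  exact/(subvP (gradedJ d j))/memv_img.
by rewrite qmap_xmul_id zero_lfunE mem0v.
Qed.

End Preimage.

Theorem lemma3p8 (F : fieldType) (n : nat) (G : {set {set 'I_n.+1}})
  (i : 'I_n.+1) :
  Gotzmann (sqf_monideal F G) ->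
  (xvar F i \in sqf_monideal F G 1)%VS ->
  Gotzmann (sqf_monideal F (image_gens i G)).
Proof.
(* In degree 0 the kernel of qmap is 0 and lker_qmap_m1 is not available. *)
move=> gotzI x_iI [|d] J' gradedJ' dimJ'; first by rewrite (eq_dimv0 dimJ').
pose J := qmap_preim i J'.
have kerI e : (lker (qmap F i) <= sqf_monideal F G e)%VS.
  exact: lker_qmap_sqf_monideal.
have dimJ : \dim (J d.+1) = \dim (sqf_monideal F G d.+1).
  rewrite (dimv_qmap (lker_qmap_preim _ _ _)) (dimv_qmap (kerI _)).
  by rewrite qmap_preimK qmap_sqf_monideal dimJ'.
have := gotzI d.+1 J (graded_ideal_qmap_preim i gradedJ') dimJ.
rewrite (dimv_qmap (lker_qmap_m1 (kerI _))).
rewrite (dimv_qmap (lker_qmap_m1 (lker_qmap_preim _ _ _))).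
by rewrite !qmap_m1 qmap_preimK qmap_sqf_monideal leq_add2l.
Qed.
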